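(* Let $T(x)=\int_{\mathbb R}e^{-\sqrt2|x-y|}\mathrm{sech}^2(y)\,dy$. For integers $k\ge1$ set (integrals over $\mathbb R$ in $x$) $p_k=\int\mathrm{sech}^k\cos$, $q_k=\int\mathrm{sech}^k\log(\mathrm{sech})\cos$, $r_k=\int\mathrm{sech}^kT\cos$, $s_k=\int\mathrm{sech}^kT\tanh\sin$, $a_k=\int x\,\mathrm{sech}^k\tanh\cos$, $b_k=\int\mathrm{sech}^k\tanh\sin$, $c_k=\int\mathrm{sech}^k\log(\mathrm{sech})\tanh\sin$, $d_k=\int x\,\mathrm{sech}^k\sin$, $e_k=\int\mathrm{sech}^k\tanh\,T'\cos$, $f_k=\int\mathrm{sech}^kT'\sin$. Then for every integer $k\ge1$: \begin{align*} b_k&=(k+1)p_{k+2}-kp_k,\\ c_k&=(k+1)q_{k+2}-kq_k+p_{k+2}-p_k,\\ d_k&=-ka_k+p_k,\\ e_k&=s_k+kr_k-(k+1)r_{k+2},\\ f_k&=-r_k+ks_k. \end{align*}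
   Context: $\mathrm{sech},\tanh,\cos,\sin$ denote the functions $\mathrm{sech}(x),\tanh(x),\cos(x),\sin(x)$, products are pointwise, primes denote $d/dx$. *)

From Stdlib Require Import Reals.
From Coquelicot Require Import Coquelicot.
Open Scope R_scope.

Definition sech (x : R) : R := / cosh x.

Definition intR (f : R -> R) : R :=
  RInt_gen f (Rbar_locally m_infty) (Rbar_locally p_infty).

Definition T (x : R) : R :=
  intR (fun y => exp (- sqrt 2 * Rabs (x - y)) * (sech y) ^ 2).

Definition dT (x : R) : R := Derive T x.

Definition p_ (k : nat) : R := intR (fun x => sech x ^ k * cos x).
Definition q_ (k : nat) : R := intR (fun x => sech x ^ k * ln (sech x) * cos x).
Definition r_ (k : nat) : R := intR (fun x => sech x ^ k * T x * cos x).
Definition s_ (k : nat) : R := intR (fun x => sech x ^ k * T x * tanh x * sin x).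
Definition a_ (k : nat) : R := intR (fun x => x * sech x ^ k * tanh x * cos x).
Definition b_ (k : nat) : R := intR (fun x => sech x ^ k * tanh x * sin x).
Definition c_ (k : nat) : R := intR (fun x => sech x ^ k * ln (sech x) * tanh x * sin x).
Definition d_ (k : nat) : R := intR (fun x => x * sech x ^ k * sin x).
Definition e_ (k : nat) : R := intR (fun x => sech x ^ k * tanh x * dT x * cos x).
Definition f_ (k : nat) : R := intR (fun x => sech x ^ k * dT x * sin x).

(* Each identity is an integration by parts: for an explicit F built from sech^k, tanh,
   log sech, x, T and cos or sin, F' is the difference of the two integrands, and
   int F' = 0 because F = O(x^-2) at both ends; the algebra only uses sech' = -sech tanh and
   tanh' = sech^2 = 1 - tanh^2.  The integrands on the right are continuous and O(x^-2),
   hence improperly integrable, and then so is the one on the left.  For the terms involving T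
   one needs T to be C^1 and bounded: cutting the kernel at y = x gives, with c = sqrt 2 < 2,
     T(x) = e^(-cx) int_(-oo)^x e^(cy) sech^2 y dy + e^(cx) int_x^oo e^(-cy) sech^2 y dy,
   two convergent tails, so T' = c (second - first) is continuous and |T| <= int sech^2. *)

From Stdlib Require Import Reals Lra Lia.
From Coquelicot Require Import Coquelicot.
Open Scope R_scope.

(** * Hyperbolic functions *)

Lemma exp_le_mono x y : x <= y -> exp x <= exp y.
Proof. intros [H | ->]; [left; apply exp_increasing, H | right; reflexivity]. Qed.

Lemma exp_mul_exp_opp x : exp x * exp (- x) = 1.
Proof. rewrite <- exp_plus, Rplus_opp_r; apply exp_0. Qed.

Lemma exp_opp_mul_exp (s x : R) : exp (- s * x) * exp (s * x) = 1.
Proof. rewrite Rmult_comm, Ropp_mult_distr_l_reverse; apply exp_mul_exp_opp. Qed.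

Lemma exp_pow a n : exp a ^ n = exp (INR n * a).
Proof. rewrite <- Rpower_pow by apply exp_pos; unfold Rpower; rewrite ln_exp; reflexivity. Qed.

Lemma cosh_exp_abs_bounds x : exp (Rabs x) <= 2 * cosh x <= 2 * exp (Rabs x).
Proof.
  assert (H1 := exp_le_mono _ _ (Rle_abs x)).
  assert (H2 := exp_le_mono _ _ (Rabs_maj2 x)).
  generalize (exp_pos x) (exp_pos (- x)); intros.
  unfold cosh; destruct (Rle_dec 0 x).
  - rewrite Rabs_right in * by lra; lra.
  - rewrite Rabs_left in * by lra; lra.
Qed.

Lemma cosh_ge_1 x : 1 <= cosh x.
Proof.
  assert (Hp := exp_mul_exp_opp x); assert (He := exp_pos x).
  assert (0 <= (exp x - 1) ^ 2) by apply pow2_ge_0.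
  unfold cosh; nra.
Qed.

Lemma cosh_pos x : 0 < cosh x.
Proof. generalize (cosh_ge_1 x); lra. Qed.

Lemma sech_pos x : 0 < sech x.
Proof. apply Rinv_0_lt_compat, cosh_pos. Qed.

Lemma sech_le_1 x : sech x <= 1.
Proof. rewrite <- Rinv_1; apply Rinv_le_contravar; [lra | apply cosh_ge_1]. Qed.

Lemma sech_mul_exp_abs_le x : sech x * exp (Rabs x) <= 2.
Proof.
  assert (H := cosh_exp_abs_bounds x); assert (Hc := cosh_pos x).
  unfold sech; apply (Rmult_le_reg_l (cosh x)); [lra |].
  rewrite <- Rmult_assoc, Rinv_r by lra; lra.
Qed.

Lemma Rabs_ln_sech_le x : Rabs (ln (sech x)) <= Rabs x.
Proof.
  assert (H1 := cosh_ge_1 x); assert (H2 := cosh_exp_abs_bounds x).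
  unfold sech; rewrite ln_Rinv, Rabs_Ropp by lra.
  rewrite Rabs_right by (rewrite <- ln_1; apply Rle_ge, ln_le; lra).
  rewrite <- (ln_exp (Rabs x)); apply ln_le; lra.
Qed.

Lemma Rabs_sech_pow_le k x : (1 <= k)%nat -> Rabs (sech x ^ k) <= Rabs (sech x).
Proof.
  intros Hk; assert (Hs := sech_pos x); assert (H1 := sech_le_1 x).
  rewrite !Rabs_pos_eq by (try apply pow_le; lra).
  destruct k as [| m]; [lia |]; simpl.
  assert (0 <= sech x ^ m <= 1)
    by (split; [apply pow_le; lra | rewrite <- (pow1 m); apply pow_incr; lra]).
  nra.
Qed.

Lemma cosh_sq_sub_sinh_sq x : cosh x ^ 2 - sinh x ^ 2 = 1.
Proof. rewrite <- (exp_mul_exp_opp x); unfold cosh, sinh; field. Qed.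

Lemma sech_sq x : sech x ^ 2 = 1 - tanh x ^ 2.
Proof.
  assert (H := cosh_pos x).
  unfold tanh, sech; field_simplify; try lra.
  rewrite <- (cosh_sq_sub_sinh_sq x); field; lra.
Qed.

Lemma Rabs_tanh_le_1 x : Rabs (tanh x) <= 1.
Proof.
  assert (H := sech_sq x); rewrite <- (pow2_abs (tanh x)) in H.
  generalize (sech_pos x) (Rabs_pos (tanh x)); intros; nra.
Qed.

(** * Derivatives *)

Lemma is_derive_eq (f : R -> R) (x l l' : R) : is_derive f x l -> l = l' -> is_derive f x l'.
Proof. now intros H <-. Qed.

Lemma is_derive_Ropp (f : R -> R) (x l : R) : is_derive f x l -> is_derive (fun t => - f t) x (- l).
Proof. apply (is_derive_opp (K := R_AbsRing) (V := R_NormedModule)). Qed.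

Lemma is_derive_Rid (x : R) : is_derive (fun t => t) x 1.
Proof. apply (is_derive_id (K := R_AbsRing)). Qed.

Lemma is_derive_exp_mul (s x : R) : is_derive (fun y => exp (s * y)) x (s * exp (s * x)).
Proof. auto_derive; [exact I | ring]. Qed.

Lemma is_derive_cosh (x : R) : is_derive cosh x (sinh x).
Proof. apply is_derive_Reals, derivable_pt_lim_cosh. Qed.

Lemma is_derive_sinh (x : R) : is_derive sinh x (cosh x).
Proof. apply is_derive_Reals, derivable_pt_lim_sinh. Qed.

Lemma is_derive_sech (x : R) : is_derive sech x (- sech x * tanh x).
Proof.
  assert (Hc := cosh_pos x).
  eapply is_derive_eq; [apply is_derive_inv; [apply is_derive_cosh | lra] |].
  unfold sech, tanh; field; lra.
Qed.

Lemma is_derive_tanh (x : R) : is_derive tanh x (sech x ^ 2).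
Proof.
  assert (Hc := cosh_pos x).
  eapply is_derive_eq;
    [apply is_derive_div; [apply is_derive_sinh | apply is_derive_cosh | lra] |].
  rewrite <- (Rmult_1_l (sech x ^ 2)), <- (cosh_sq_sub_sinh_sq x); unfold sech; field; lra.
Qed.

Lemma is_derive_sech_pow k (x : R) :
  is_derive (fun t => sech t ^ k) x (- INR k * sech x ^ k * tanh x).
Proof.
  eapply is_derive_eq; [apply is_derive_pow, is_derive_sech |].
  destruct k as [| k]; simpl; ring.
Qed.

Lemma is_derive_ln_sech (x : R) : is_derive (fun t => ln (sech t)) x (- tanh x).
Proof.
  assert (Hs := sech_pos x).
  eapply is_derive_eq;
    [apply (is_derive_comp ln sech); [apply is_derive_ln, Hs | apply is_derive_sech] |].
  unfold scal; simpl; unfold mult; simpl; field; lra.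
Qed.

Lemma continuous_exp_mul (s : R) (g : R -> R) x :
  continuous g x -> continuous (fun y => exp (s * y) * g y) x.
Proof.
  intros Hg; apply (continuous_mult (K := R_AbsRing) (fun y => exp (s * y))); [| exact Hg].
  apply (ex_derive_continuous (V := R_NormedModule)); eexists; apply is_derive_exp_mul.
Qed.

Lemma continuous_sech_pow k x : continuous (fun t => sech t ^ k) x.
Proof. apply (ex_derive_continuous (V := R_NormedModule)); eexists; apply is_derive_sech_pow. Qed.

(** * Decay at infinity *)

Lemma pow_le_exp n t : 0 <= t -> t ^ n <= INR n ^ n * exp t.
Proof.
  intros Ht; destruct n as [| m].
  - simpl; generalize (exp_ineq1_le t); lra.
  - set (N := INR (S m)); assert (HN : 0 < N) by apply lt_0_INR, Nat.lt_0_succ.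
    replace t with (N * (t / N)) at 1 by (field; lra).
    replace (exp t) with (exp (t / N) ^ S m) by (rewrite exp_pow; f_equal; fold N; field; lra).
    rewrite Rpow_mult_distr; apply Rmult_le_compat_l; [apply pow_le; lra |].
    apply pow_incr; split; [apply Rdiv_le_0_compat; lra |].
    generalize (exp_ineq1_le (t / N)); lra.
Qed.

Lemma pow_abs_mul_sech_le n x : Rabs x ^ n * sech x <= 2 * INR n ^ n.
Proof.
  assert (H := pow_le_exp n (Rabs x) (Rabs_pos x)).
  assert (Hs := sech_mul_exp_abs_le x); assert (Hp := sech_pos x).
  assert (0 <= INR n ^ n) by apply pow_le, pos_INR.
  apply (Rle_trans _ (INR n ^ n * exp (Rabs x) * sech x)); [apply Rmult_le_compat_r; lra |].
  rewrite Rmult_assoc, (Rmult_comm (exp _)), (Rmult_comm 2).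
  apply Rmult_le_compat_l; lra.
Qed.

Definition inv_sq_decay (f : R -> R) : Prop := exists C, forall x, x ^ 2 * Rabs (f x) <= C.

Definition bounded (f : R -> R) : Prop := exists B, forall x, Rabs (f x) <= B.

Lemma inv_sq_bound_nonneg (f : R -> R) C : (forall x, x ^ 2 * Rabs (f x) <= C) -> 0 <= C.
Proof. intros HC; generalize (HC 0) (Rabs_pos (f 0)); simpl; lra. Qed.

Lemma inv_sq_decay_le (f g : R -> R) :
  inv_sq_decay g -> (forall x, Rabs (f x) <= Rabs (g x)) -> inv_sq_decay f.
Proof.
  intros [C HC] Hfg; exists C; intros x.
  eapply Rle_trans; [| apply HC]; apply Rmult_le_compat_l; [apply pow2_ge_0 | apply Hfg].
Qed.

Lemma inv_sq_decay_mul_bounded (f g : R -> R) :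
  inv_sq_decay f -> bounded g -> inv_sq_decay (fun x => f x * g x).
Proof.
  intros [C HC] [B HB]; exists (C * B); intros x.
  assert (HB0 : 0 <= B) by (generalize (HB 0) (Rabs_pos (g 0)); lra).
  rewrite Rabs_mult, <- Rmult_assoc.
  apply Rmult_le_compat; auto; [apply Rmult_le_pos; [apply pow2_ge_0 | apply Rabs_pos] | apply Rabs_pos].
Qed.

Lemma inv_sq_decay_opp (f : R -> R) : inv_sq_decay f -> inv_sq_decay (fun x => - f x).
Proof. intros Hf; apply (inv_sq_decay_le _ _ Hf); intros; rewrite Rabs_Ropp; apply Rle_refl. Qed.

Lemma inv_sq_decay_sech : inv_sq_decay sech.
Proof.
  exists (2 * INR 2 ^ 2); intros x.
  rewrite <- pow2_abs, (Rabs_pos_eq (sech x)) by apply Rlt_le, sech_pos.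
  apply pow_abs_mul_sech_le.
Qed.

Lemma inv_sq_decay_id_mul_sech : inv_sq_decay (fun x => x * sech x).
Proof.
  exists (2 * INR 3 ^ 3); intros x.
  rewrite <- pow2_abs, Rabs_mult, (Rabs_pos_eq (sech x)) by apply Rlt_le, sech_pos.
  replace (Rabs x ^ 2 * (Rabs x * sech x)) with (Rabs x ^ 3 * sech x) by ring.
  apply pow_abs_mul_sech_le.
Qed.

Lemma inv_sq_decay_sech_pow k : (1 <= k)%nat -> inv_sq_decay (fun x => sech x ^ k).
Proof. intros Hk; apply (inv_sq_decay_le _ _ inv_sq_decay_sech); intros; apply Rabs_sech_pow_le, Hk. Qed.

Lemma inv_sq_decay_id_mul_sech_pow k : (1 <= k)%nat -> inv_sq_decay (fun x => x * sech x ^ k).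
Proof.
  intros Hk; apply (inv_sq_decay_le _ _ inv_sq_decay_id_mul_sech); intros x.
  rewrite !Rabs_mult; apply Rmult_le_compat_l; [apply Rabs_pos | apply Rabs_sech_pow_le, Hk].
Qed.

Lemma inv_sq_decay_sech_pow_mul_ln_sech k :
  (1 <= k)%nat -> inv_sq_decay (fun x => sech x ^ k * ln (sech x)).
Proof.
  intros Hk; apply (inv_sq_decay_le _ _ inv_sq_decay_id_mul_sech); intros x.
  rewrite !Rabs_mult, Rmult_comm.
  apply Rmult_le_compat; try apply Rabs_pos; [apply Rabs_ln_sech_le | apply Rabs_sech_pow_le, Hk].
Qed.

(* With a = 2 - |s|: a^2 x^2 e^(sx) sech^2 x <= 4 e^(a|x|) e^(|s||x|) sech^2 x = 4 (sech x e^|x|)^2. *)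
Lemma inv_sq_decay_exp_mul_sech_sq s :
  Rabs s < 2 -> inv_sq_decay (fun x => exp (s * x) * sech x ^ 2).
Proof.
  intros Hs; set (a := 2 - Rabs s); assert (Ha : 0 < a) by (unfold a; lra).
  exists (16 / a ^ 2); intros x; cbv beta; set (u := Rabs x); set (w := sech x ^ 2).
  assert (Hu : 0 <= u) by apply Rabs_pos.
  assert (Hw : 0 <= w) by (apply pow_le, Rlt_le, sech_pos).
  assert (Hsx : exp (s * x) <= exp (Rabs s * u))
    by (apply exp_le_mono; unfold u; rewrite <- Rabs_mult; apply Rle_abs).
  assert (Hau : (a * u) ^ 2 <= 4 * exp (a * u))
    by (replace 4 with (INR 2 ^ 2) by (simpl; ring); apply pow_le_exp; nra).
  assert (Hexp : exp (a * u) * exp (Rabs s * u) * w = (sech x * exp u) ^ 2)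
    by (rewrite <- exp_plus; replace (a * u + Rabs s * u) with (INR 2 * u) by (unfold a; simpl; ring);
        rewrite <- exp_pow; unfold w; ring).
  assert (Hse : (sech x * exp u) ^ 2 <= 4).
  { assert (H := sech_mul_exp_abs_le x); fold u in H.
    assert (0 <= sech x * exp u) by (apply Rmult_le_pos; apply Rlt_le; [apply sech_pos | apply exp_pos]).
    nra. }
  rewrite (Rabs_pos_eq (_ * w)) by (apply Rmult_le_pos; [apply Rlt_le, exp_pos | exact Hw]).
  rewrite <- pow2_abs; fold u; apply (Rmult_le_reg_l (a ^ 2)); [apply pow_lt, Ha |].
  replace (a ^ 2 * (16 / a ^ 2)) with 16 by (field; lra).
  apply (Rle_trans _ ((a * u) ^ 2 * (exp (Rabs s * u) * w))).
  { replace (a ^ 2 * (u ^ 2 * (exp (s * x) * w))) with ((a * u) ^ 2 * (exp (s * x) * w)) by ring.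
    apply Rmult_le_compat_l; [apply pow2_ge_0 | apply Rmult_le_compat_r; lra]. }
  apply (Rle_trans _ (4 * exp (a * u) * (exp (Rabs s * u) * w))).
  { apply Rmult_le_compat_r; [apply Rmult_le_pos; [apply Rlt_le, exp_pos | lra] | lra]. }
  rewrite Rmult_assoc, <- Rmult_assoc with (r1 := exp (a * u)), Hexp; lra.
Qed.

Lemma bounded_cos : bounded cos.
Proof. exists 1; intros; apply Rabs_le, COS_bound. Qed.

Lemma bounded_sin : bounded sin.
Proof. exists 1; intros; apply Rabs_le, SIN_bound. Qed.

Lemma bounded_tanh : bounded tanh.
Proof. exists 1; apply Rabs_tanh_le_1. Qed.

Lemma inv_sq_decay_small (f : R -> R) (eps : posreal) :
  inv_sq_decay f -> exists M, 0 < M /\ forall x, M < Rabs x -> Rabs (f x) < eps.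
Proof.
  intros [C HC]; assert (He := cond_pos eps); assert (HC0 := inv_sq_bound_nonneg f C HC).
  assert (HCe : 0 <= C / eps) by (apply Rdiv_le_0_compat; lra).
  exists (C / eps + 1); split; [lra |].
  intros x Hx; specialize (HC x); rewrite <- pow2_abs in HC.
  assert (HM : C < eps * Rabs x).
  { replace C with (eps * (C / eps)) by (field; lra). apply Rmult_lt_compat_l; lra. }
  assert (0 <= Rabs (f x)) by apply Rabs_pos.
  assert (1 <= Rabs x) by lra.
  nra.
Qed.

Lemma inv_sq_decay_lim_0 (F : R -> R) :
  inv_sq_decay F ->
  filterlim F (Rbar_locally m_infty) (locally 0) /\ filterlim F (Rbar_locally p_infty) (locally 0).
Proof.
  intros HF; split; apply filterlim_locally; intros eps;
    destruct (inv_sq_decay_small F eps HF) as [M [HM0 HM]].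
  - exists (- M); intros x Hx; change (Rabs (F x - 0) < eps); rewrite Rminus_0_r.
    apply HM; rewrite Rabs_left; lra.
  - exists M; intros x Hx; change (Rabs (F x - 0) < eps); rewrite Rminus_0_r.
    apply HM; rewrite Rabs_right; lra.
Qed.

(** * Integrals over the real line *)

Definition is_intR (f : R -> R) (l : R) : Prop :=
  is_RInt_gen f (Rbar_locally m_infty) (Rbar_locally p_infty) l.

Lemma is_intR_unique (f : R -> R) l : is_intR f l -> intR f = l.
Proof.
  exact (is_RInt_gen_unique (V := R_CompleteNormedModule)
           (Fa := Rbar_locally m_infty) (Fb := Rbar_locally p_infty) f l).
Qed.

Lemma is_intR_ext (f g : R -> R) l : (forall x, f x = g x) -> is_intR f l -> is_intR g l.
Proof.
  intros E; apply (is_RInt_gen_ext (V := R_NormedModule)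
                     (Fa := Rbar_locally m_infty) (Fb := Rbar_locally p_infty) f g l).
  apply filter_forall; intros; apply E.
Qed.

Lemma is_intR_plus (f g : R -> R) lf lg :
  is_intR f lf -> is_intR g lg -> is_intR (fun x => f x + g x) (lf + lg).
Proof. exact (is_RInt_gen_plus (V := R_NormedModule) f g lf lg). Qed.

Lemma is_intR_minus (f g : R -> R) lf lg :
  is_intR f lf -> is_intR g lg -> is_intR (fun x => f x - g x) (lf - lg).
Proof. exact (is_RInt_gen_minus (V := R_NormedModule) f g lf lg). Qed.

Lemma is_intR_opp (f : R -> R) l : is_intR f l -> is_intR (fun x => - f x) (- l).
Proof.
  exact (is_RInt_gen_opp (V := R_NormedModule)
           (Fa := Rbar_locally m_infty) (Fb := Rbar_locally p_infty) f l).
Qed.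

Lemma is_intR_scal (f : R -> R) k l : is_intR f l -> is_intR (fun x => k * f x) (k * l).
Proof. exact (is_RInt_gen_scal (V := R_NormedModule) f k l). Qed.

Lemma ex_RInt_of_continuous (f : R -> R) a b : (forall x, continuous f x) -> ex_RInt f a b.
Proof. intros Hf; apply (ex_RInt_continuous (V := R_CompleteNormedModule)); intros; apply Hf. Qed.

Lemma is_RInt_inv_sq C u v : u <= v -> (0 < u \/ v < 0) ->
  is_RInt (fun t => C / t ^ 2) u v (C / u - C / v).
Proof.
  intros Huv Hs.
  assert (Hnz : forall t, Rmin u v <= t <= Rmax u v -> t <> 0)
    by (rewrite Rmin_left, Rmax_right by lra; intros; lra).
  replace (C / u - C / v) with (minus ((fun t => - C / t) v) ((fun t => - C / t) u))
    by (unfold minus, plus, opp; simpl; field; split; apply Hnz; rewrite ?Rmin_left, ?Rmax_right; lra).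
  apply (is_RInt_derive (V := R_CompleteNormedModule)); intros t Ht; specialize (Hnz t Ht).
  - auto_derive; [exact Hnz | field; exact Hnz].
  - apply (ex_derive_continuous (V := R_NormedModule)); auto_derive.
    rewrite Rmult_1_r; apply Rmult_integral_contrapositive_currified; exact Hnz.
Qed.

Lemma abs_RInt_le_inv_sq (f : R -> R) C u v :
  (forall x, continuous f x) -> (forall x, x ^ 2 * Rabs (f x) <= C) ->
  u <= v -> (0 < u \/ v < 0) -> Rabs (RInt f u v) <= C / u - C / v.
Proof.
  intros Hf HC Huv Hs; assert (Hg := is_RInt_inv_sq C u v Huv Hs).
  eapply Rle_trans; [apply abs_RInt_le; [lra | apply ex_RInt_of_continuous, Hf] |].
  rewrite <- (is_RInt_unique _ _ _ _ Hg).
  apply (RInt_le _ (fun t => C / t ^ 2)); [lra | | exists (C / u - C / v); exact Hg |].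
  - apply ex_RInt_of_continuous; intros; apply continuous_Rabs_comp, Hf.
  - intros t Ht; assert (Ht2 : 0 < t ^ 2) by (apply pow2_gt_0; lra).
    apply (Rmult_le_reg_l (t ^ 2)); [exact Ht2 |].
    unfold Rdiv; rewrite <- Rmult_assoc, (Rmult_comm _ C), Rmult_assoc, Rinv_r by lra.
    rewrite Rmult_1_r; apply HC.
Qed.

Lemma abs_RInt_tail_le (f : R -> R) C M u v :
  (forall x, continuous f x) -> (forall x, x ^ 2 * Rabs (f x) <= C) -> 0 < M ->
  (M <= u /\ M <= v) \/ (u <= -M /\ v <= -M) -> Rabs (RInt f u v) <= C / M.
Proof.
  intros Hf HC HM; assert (HC0 := inv_sq_bound_nonneg f C HC).
  assert (HCM : forall w, M <= w -> 0 <= C / w <= C / M).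
  { intros w Hw; split; [apply Rdiv_le_0_compat; lra |].
    apply Rmult_le_compat_l; [lra | apply Rinv_le_contravar; lra]. }
  assert (Hle : forall u v, u <= v -> (M <= u \/ v <= -M) -> Rabs (RInt f u v) <= C / M).
  { clear u v; intros u v Huv Hside.
    eapply Rle_trans; [apply (abs_RInt_le_inv_sq f C); auto; lra |].
    destruct Hside.
    - generalize (HCM u ltac:(lra)) (HCM v ltac:(lra)); lra.
    - replace (C / u - C / v) with (C / - v - C / - u) by (field; lra).
      generalize (HCM (- u) ltac:(lra)) (HCM (- v) ltac:(lra)); lra. }
  intros Hside; destruct (Rle_dec u v) as [Huv | Huv].
  - apply Hle; [exact Huv | lra].
  - rewrite <- (opp_RInt_swap (V := R_CompleteNormedModule)) by (apply ex_RInt_of_continuous, Hf).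
    unfold opp; simpl; rewrite Rabs_Ropp; apply Hle; lra.
Qed.

Lemma RInt_tail_small (f : R -> R) (eps : posreal) :
  (forall x, continuous f x) -> inv_sq_decay f ->
  exists M, forall u v, (M <= u /\ M <= v) \/ (u <= -M /\ v <= -M) -> Rabs (RInt f u v) < eps.
Proof.
  intros Hf [C HC]; assert (He := cond_pos eps); assert (HC0 := inv_sq_bound_nonneg f C HC).
  assert (HM : 0 < C / eps + 1) by (generalize (Rdiv_le_0_compat C eps HC0 He); lra).
  exists (C / eps + 1); intros u v Huv.
  eapply Rle_lt_trans; [apply (abs_RInt_tail_le f C); eauto |].
  apply (Rmult_lt_reg_r (C / eps + 1)); [exact HM |].
  field_simplify; lra.
Qed.

Lemma RInt_lim_m_infty (f : R -> R) b :
  (forall x, continuous f x) -> inv_sq_decay f ->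
  exists l, filterlim (fun a => RInt f a b) (Rbar_locally m_infty) (locally l).
Proof.
  intros Hf Hd; apply (Hierarchy.filterlim_locally_cauchy (F := Rbar_locally m_infty)).
  intros eps; destruct (RInt_tail_small f eps Hf Hd) as [M HM].
  exists (fun a => a < - M); split; [exists (- M); auto |].
  intros u v Hu Hv; change (Rabs (RInt f v b - RInt f u b) < eps).
  assert (E : RInt f v u + RInt f u b = RInt f v b)
    by (apply (RInt_Chasles (V := R_CompleteNormedModule)); apply ex_RInt_of_continuous, Hf).
  replace (RInt f v b - RInt f u b) with (RInt f v u) by lra.
  apply HM; lra.
Qed.

Lemma RInt_lim_p_infty (f : R -> R) a :
  (forall x, continuous f x) -> inv_sq_decay f ->
  exists l, filterlim (fun b => RInt f a b) (Rbar_locally p_infty) (locally l).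
Proof.
  intros Hf Hd; apply (Hierarchy.filterlim_locally_cauchy (F := Rbar_locally p_infty)).
  intros eps; destruct (RInt_tail_small f eps Hf Hd) as [M HM].
  exists (fun b => M < b); split; [exists M; auto |].
  intros u v Hu Hv; change (Rabs (RInt f a v - RInt f a u) < eps).
  assert (E : RInt f a u + RInt f u v = RInt f a v)
    by (apply (RInt_Chasles (V := R_CompleteNormedModule)); apply ex_RInt_of_continuous, Hf).
  replace (RInt f a v - RInt f a u) with (RInt f u v) by lra.
  apply HM; lra.
Qed.

Lemma is_RInt_gen_at_point_r (f : R -> R) (Fa : (R -> Prop) -> Prop) b l :
  (forall a, ex_RInt f a b) -> filterlim (fun a => RInt f a b) Fa (locally l) ->
  is_RInt_gen f Fa (at_point b) l.
Proof.
  intros Hex Hlim P HP.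
  apply (Filter_prod _ _ _ (fun a => P (RInt f a b)) (fun b' => b' = b));
    [apply Hlim, HP | reflexivity |].
  intros a b' Ha ->; exists (RInt f a b).
  split; [apply (RInt_correct (V := R_CompleteNormedModule)), Hex | exact Ha].
Qed.

Lemma is_RInt_gen_at_point_l (f : R -> R) a (Fb : (R -> Prop) -> Prop) l :
  (forall b, ex_RInt f a b) -> filterlim (fun b => RInt f a b) Fb (locally l) ->
  is_RInt_gen f (at_point a) Fb l.
Proof.
  intros Hex Hlim P HP.
  apply (Filter_prod _ _ _ (fun a' => a' = a) (fun b => P (RInt f a b)));
    [reflexivity | apply Hlim, HP |].
  intros a' b -> Hb; exists (RInt f a b).
  split; [apply (RInt_correct (V := R_CompleteNormedModule)), Hex | exact Hb].
Qed.

Section DecayingIntegrand.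

Variable f : R -> R.
Hypothesis f_cont : forall x, continuous f x.
Hypothesis f_decay : inv_sq_decay f.

Let is_RInt_f a b : is_RInt f a b (RInt f a b).
Proof. apply (RInt_correct (V := R_CompleteNormedModule)), ex_RInt_of_continuous, f_cont. Qed.

Lemma is_RInt_gen_m_infty b :
  is_RInt_gen f (Rbar_locally m_infty) (at_point b) (RInt_gen f (Rbar_locally m_infty) (at_point b)).
Proof.
  destruct (RInt_lim_m_infty f b f_cont f_decay) as [l Hl].
  apply (RInt_gen_correct (V := R_CompleteNormedModule)); exists l.
  apply is_RInt_gen_at_point_r; [intros; apply ex_RInt_of_continuous, f_cont | exact Hl].
Qed.

Lemma is_RInt_gen_p_infty a :
  is_RInt_gen f (at_point a) (Rbar_locally p_infty) (RInt_gen f (at_point a) (Rbar_locally p_infty)).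
Proof.
  destruct (RInt_lim_p_infty f a f_cont f_decay) as [l Hl].
  apply (RInt_gen_correct (V := R_CompleteNormedModule)); exists l.
  apply is_RInt_gen_at_point_l; [intros; apply ex_RInt_of_continuous, f_cont | exact Hl].
Qed.

Lemma is_intR_RInt_gen_split b :
  is_intR f (RInt_gen f (Rbar_locally m_infty) (at_point b)
             + RInt_gen f (at_point b) (Rbar_locally p_infty)).
Proof.
  apply (is_RInt_gen_Chasles (V := R_NormedModule) f b);
    [apply is_RInt_gen_m_infty | apply is_RInt_gen_p_infty].
Qed.

Lemma is_intR_intR : is_intR f (intR f).
Proof. rewrite (is_intR_unique _ _ (is_intR_RInt_gen_split 0)); apply is_intR_RInt_gen_split. Qed.

Lemma is_derive_RInt_gen_m_infty x :
  is_derive (fun y => RInt_gen f (Rbar_locally m_infty) (at_point y)) x (f x).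
Proof.
  apply (is_derive_ext (fun y => RInt_gen f (Rbar_locally m_infty) (at_point 0) + RInt f 0 y)).
  { intros y; symmetry; apply (is_RInt_gen_unique (V := R_CompleteNormedModule)).
    apply (is_RInt_gen_Chasles (V := R_NormedModule) f 0);
      [apply is_RInt_gen_m_infty | apply is_RInt_gen_at_point, is_RInt_f]. }
  eapply is_derive_eq;
    [apply (is_derive_plus (K := R_AbsRing) (V := R_NormedModule)); [apply is_derive_const |] |].
  - apply (is_derive_RInt (V := R_CompleteNormedModule) f _ 0); [| apply f_cont].
    apply filter_forall; intros; apply is_RInt_f.
  - unfold plus, zero; simpl; ring.
Qed.

Lemma is_derive_RInt_gen_p_infty x :
  is_derive (fun y => RInt_gen f (at_point y) (Rbar_locally p_infty)) x (- f x).
Proof.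
  apply (is_derive_ext (fun y => - RInt f 0 y + RInt_gen f (at_point 0) (Rbar_locally p_infty))).
  { intros y; symmetry; apply (is_RInt_gen_unique (V := R_CompleteNormedModule)).
    assert (E : RInt f y 0 = - RInt f 0 y)
      by (rewrite <- (opp_RInt_swap (V := R_CompleteNormedModule)) by apply ex_RInt_of_continuous, f_cont;
          reflexivity).
    rewrite <- E; apply (is_RInt_gen_Chasles (V := R_NormedModule) f 0);
      [apply is_RInt_gen_at_point, is_RInt_f | apply is_RInt_gen_p_infty]. }
  eapply is_derive_eq;
    [apply (is_derive_plus (K := R_AbsRing) (V := R_NormedModule));
       [apply (is_derive_Ropp (fun y => RInt f 0 y)) | apply is_derive_const] |].
  - apply (is_derive_RInt (V := R_CompleteNormedModule) f _ 0); [| apply f_cont].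
    apply filter_forall; intros; apply is_RInt_f.
  - unfold plus, zero; simpl; ring.
Qed.

End DecayingIntegrand.

Lemma is_intR_derive_0 (F f : R -> R) :
  (forall x, is_derive F x (f x)) -> (forall x, continuous f x) -> inv_sq_decay F -> is_intR f 0.
Proof.
  intros HD Hf HF; destruct (inv_sq_decay_lim_0 F HF) as [Hm Hp].
  assert (E : forall x, Derive F x = f x) by (intros; apply is_derive_unique, HD).
  apply (is_intR_ext (Derive F)); [exact E |].
  replace 0 with (0 - 0) by ring.
  apply (is_RInt_gen_Derive (Fa := Rbar_locally m_infty) (Fb := Rbar_locally p_infty) F 0 0); auto;
    apply filter_forall; intros ab x _.
  - exists (f x); apply HD.
  - apply (continuous_ext f); [intros; symmetry; apply E | apply Hf].
Qed.

Lemma is_intR_of_derive (F f g : R -> R) l :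
  is_intR g l -> (forall x, is_derive F x (f x - g x)) ->
  (forall x, continuous f x) -> (forall x, continuous g x) -> inv_sq_decay F -> is_intR f l.
Proof.
  intros Hg HD Hf Hgc HF.
  assert (H0 := is_intR_derive_0 F (fun x => f x - g x) HD
                  (fun x => continuous_minus f g x (Hf x) (Hgc x)) HF).
  apply (is_intR_ext (fun x => (f x - g x) + g x)); [intros; ring |].
  replace l with (0 + l) by ring; apply is_intR_plus; assumption.
Qed.

(** * Convolution with an exponential kernel *)

Section ExponentialConvolution.

Variables (c : R) (g : R -> R).
Hypothesis c_ge0 : 0 <= c.
Hypothesis g_cont : forall x, continuous g x.
Hypothesis g_ge0 : forall x, 0 <= g x.
Hypothesis g_decay : inv_sq_decay g.
Hypothesis g_exp_decay : inv_sq_decay (fun y => exp (c * y) * g y).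
Hypothesis g_exp_opp_decay : inv_sq_decay (fun y => exp (- c * y) * g y).

Definition exp_kernel (x y : R) : R := exp (- c * Rabs (x - y)) * g y.

Definition conv_lower (x : R) : R :=
  exp (- c * x) * RInt_gen (fun y => exp (c * y) * g y) (Rbar_locally m_infty) (at_point x).

Definition conv_upper (x : R) : R :=
  exp (c * x) * RInt_gen (fun y => exp (- c * y) * g y) (at_point x) (Rbar_locally p_infty).

Lemma is_RInt_gen_conv_lower x :
  is_RInt_gen (exp_kernel x) (Rbar_locally m_infty) (at_point x) (conv_lower x).
Proof.
  apply (is_RInt_gen_ext (fun y => scal (exp (- c * x)) (exp (c * y) * g y))).
  - apply (Filter_prod _ _ _ (fun a => a < x) (fun b => b = x)); [exists x; auto | reflexivity |].
    intros a b Ha -> y Hy; simpl in Hy; rewrite Rmin_left, Rmax_right in Hy by lra.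
    unfold exp_kernel, scal; simpl; unfold mult; simpl.
    rewrite Rabs_right by lra; rewrite <- Rmult_assoc, <- exp_plus; f_equal; f_equal; ring.
  - unfold conv_lower; apply (is_RInt_gen_scal (V := R_NormedModule) (fun y => exp (c * y) * g y)).
    apply is_RInt_gen_m_infty; [intros; apply continuous_exp_mul, g_cont | exact g_exp_decay].
Qed.

Lemma is_RInt_gen_conv_upper x :
  is_RInt_gen (exp_kernel x) (at_point x) (Rbar_locally p_infty) (conv_upper x).
Proof.
  apply (is_RInt_gen_ext (fun y => scal (exp (c * x)) (exp (- c * y) * g y))).
  - apply (Filter_prod _ _ _ (fun a => a = x) (fun b => x < b)); [reflexivity | exists x; auto |].
    intros a b -> Hb y Hy; simpl in Hy; rewrite Rmin_left, Rmax_right in Hy by lra.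
    unfold exp_kernel, scal; simpl; unfold mult; simpl.
    rewrite Rabs_left by lra; rewrite <- Rmult_assoc, <- exp_plus; f_equal; f_equal; ring.
  - unfold conv_upper; apply (is_RInt_gen_scal (V := R_NormedModule) (fun y => exp (- c * y) * g y)).
    apply is_RInt_gen_p_infty; [intros; apply continuous_exp_mul, g_cont | exact g_exp_opp_decay].
Qed.

Lemma intR_exp_kernel x : intR (exp_kernel x) = conv_lower x + conv_upper x.
Proof.
  apply is_intR_unique, (is_RInt_gen_Chasles (V := R_NormedModule) _ x);
    [apply is_RInt_gen_conv_lower | apply is_RInt_gen_conv_upper].
Qed.

Lemma is_derive_conv_lower x : is_derive conv_lower x (- c * conv_lower x + g x).
Proof.
  unfold conv_lower; eapply is_derive_eq.
  { apply (Derive.is_derive_mult (fun y => exp (- c * y))).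
    - apply is_derive_exp_mul.
    - apply is_derive_RInt_gen_m_infty; [intros; apply continuous_exp_mul, g_cont | exact g_exp_decay]. }
  cbv beta; rewrite <- (Rmult_assoc (exp (- c * x))), exp_opp_mul_exp; ring.
Qed.

Lemma is_derive_conv_upper x : is_derive conv_upper x (c * conv_upper x - g x).
Proof.
  unfold conv_upper; eapply is_derive_eq.
  { apply (Derive.is_derive_mult (fun y => exp (c * y))).
    - apply is_derive_exp_mul.
    - apply is_derive_RInt_gen_p_infty;
        [intros; apply continuous_exp_mul, g_cont | exact g_exp_opp_decay]. }
  cbv beta; rewrite Ropp_mult_distr_r, <- (Rmult_assoc (exp (c * x))), (Rmult_comm (exp (c * x))).
  rewrite exp_opp_mul_exp; ring.
Qed.

Lemma is_derive_conv x :
  is_derive (fun x => intR (exp_kernel x)) x (c * (conv_upper x - conv_lower x)).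
Proof.
  apply (is_derive_ext (fun x => conv_lower x + conv_upper x));
    [intros; symmetry; apply intR_exp_kernel |].
  eapply is_derive_eq; [apply (is_derive_plus (K := R_AbsRing) (V := R_NormedModule));
    [apply is_derive_conv_lower | apply is_derive_conv_upper] |].
  unfold plus; simpl; ring.
Qed.

Lemma Derive_conv x :
  Derive (fun x => intR (exp_kernel x)) x = c * (conv_upper x - conv_lower x).
Proof. apply is_derive_unique, is_derive_conv. Qed.

Lemma continuous_Derive_conv x : continuous (Derive (fun x => intR (exp_kernel x))) x.
Proof.
  apply (continuous_ext (fun x => c * (conv_upper x - conv_lower x)));
    [intros; symmetry; apply Derive_conv |].
  apply (continuous_scal_r (K := R_AbsRing) (V := R_NormedModule) c
           (fun x => conv_upper x - conv_lower x)).
  apply (continuous_minus (V := R_NormedModule));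
    apply (ex_derive_continuous (V := R_NormedModule)); eexists;
    [apply is_derive_conv_upper | apply is_derive_conv_lower].
Qed.

Lemma Rabs_exp_kernel_le x y : Rabs (exp_kernel x y) <= g y.
Proof.
  unfold exp_kernel; rewrite Rabs_mult, Rabs_pos_eq, (Rabs_pos_eq (g y))
    by (apply Rlt_le, exp_pos || apply g_ge0).
  rewrite <- (Rmult_1_l (g y)) at 2; apply Rmult_le_compat_r; [apply g_ge0 |].
  rewrite <- exp_0; apply exp_le_mono; generalize (Rabs_pos (x - y)); nra.
Qed.

Lemma Rabs_conv_lower_upper_le x : Rabs (conv_lower x) + Rabs (conv_upper x) <= intR g.
Proof.
  rewrite (is_intR_unique _ _ (is_intR_RInt_gen_split g g_cont g_decay x)).
  apply Rplus_le_compat.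
  - apply (RInt_gen_norm (V := R_CompleteNormedModule) (Fa := Rbar_locally m_infty) (Fb := at_point x)
             (exp_kernel x) g).
    + apply (Filter_prod _ _ _ (fun a => a < x) (fun b => b = x)); [exists x; auto | reflexivity |].
      intros a b Ha ->; simpl; lra.
    + apply filter_forall; intros; apply Rabs_exp_kernel_le.
    + apply is_RInt_gen_conv_lower.
    + apply is_RInt_gen_m_infty; assumption.
  - apply (RInt_gen_norm (V := R_CompleteNormedModule) (Fa := at_point x) (Fb := Rbar_locally p_infty)
             (exp_kernel x) g).
    + apply (Filter_prod _ _ _ (fun a => a = x) (fun b => x < b)); [reflexivity | exists x; auto |].
      intros a b -> Hb; simpl; lra.
    + apply filter_forall; intros; apply Rabs_exp_kernel_le.
    + apply is_RInt_gen_conv_upper.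
    + apply is_RInt_gen_p_infty; assumption.
Qed.

Lemma bounded_conv : bounded (fun x => intR (exp_kernel x)).
Proof.
  exists (intR g); intros x; rewrite intR_exp_kernel.
  eapply Rle_trans; [apply Rabs_triang | apply Rabs_conv_lower_upper_le].
Qed.

End ExponentialConvolution.

Lemma sqrt2_bounds : 0 <= sqrt 2 < 2.
Proof. assert (H := sqrt_sqrt 2 ltac:(lra)); assert (H0 := sqrt_pos 2); nra. Qed.

Section KernelT.

Let c := sqrt 2.
Let g (y : R) : R := sech y ^ 2.

Let c_ge0 : 0 <= c := proj1 sqrt2_bounds.
Let g_cont : forall x, continuous g x := continuous_sech_pow 2.
Let g_ge0 x : 0 <= g x := pow_le _ 2 (Rlt_le _ _ (sech_pos x)).
Let g_decay : inv_sq_decay g := inv_sq_decay_sech_pow 2 ltac:(lia).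
Let g_exp_decay : inv_sq_decay (fun y => exp (c * y) * g y).
Proof. apply inv_sq_decay_exp_mul_sech_sq; rewrite Rabs_pos_eq; apply sqrt2_bounds. Qed.
Let g_exp_opp_decay : inv_sq_decay (fun y => exp (- c * y) * g y).
Proof. apply inv_sq_decay_exp_mul_sech_sq; rewrite Rabs_Ropp, Rabs_pos_eq; apply sqrt2_bounds. Qed.

Lemma T_exp_kernel : T = fun x => intR (exp_kernel c g x).
Proof. reflexivity. Qed.

Lemma is_derive_T x : is_derive T x (dT x).
Proof.
  unfold dT; rewrite T_exp_kernel, Derive_conv by assumption; apply is_derive_conv; assumption.
Qed.

Lemma continuous_dT x : continuous dT x.
Proof. unfold dT; rewrite T_exp_kernel; apply continuous_Derive_conv; assumption. Qed.

Lemma bounded_T : bounded T.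
Proof. rewrite T_exp_kernel; apply bounded_conv; assumption. Qed.

End KernelT.

(** * The recursions *)

Ltac differentiate :=
  lazymatch goal with
  | |- is_derive (fun t => @?u t * @?v t) _ _ => apply (Derive.is_derive_mult u v); differentiate
  | |- is_derive (fun t => - @?u t) _ _ => apply (is_derive_Ropp u); differentiate
  | |- is_derive (fun t => sech t ^ _) _ _ => apply is_derive_sech_pow
  | |- is_derive (fun t => ln (sech t)) _ _ => apply is_derive_ln_sech
  | |- is_derive (fun t => tanh t) _ _ => apply is_derive_tanh
  | |- is_derive (fun t => cos t) _ _ => apply is_derive_cos
  | |- is_derive (fun t => sin t) _ _ => apply is_derive_sin
  | |- is_derive (fun t => T t) _ _ => apply is_derive_T
  | |- is_derive (fun t => t) _ _ => apply is_derive_Rid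
  end.

Ltac solve_continuous :=
  lazymatch goal with
  | |- continuous (fun t => @?u t * @?v t) _ =>
      apply (continuous_mult (K := R_AbsRing) u v); solve_continuous
  | |- continuous (fun t => @?u t + @?v t) _ =>
      apply (continuous_plus (V := R_NormedModule) u v); solve_continuous
  | |- continuous (fun t => @?u t - @?v t) _ =>
      apply (continuous_minus (V := R_NormedModule) u v); solve_continuous
  | |- continuous (fun t => dT t) _ => apply continuous_dT
  | |- continuous (fun _ => ?c) _ => apply continuous_const
  | |- continuous _ _ => apply (ex_derive_continuous (V := R_NormedModule)); eexists; differentiate
  end.

Ltac solve_bounded :=
  first [apply bounded_cos | apply bounded_sin | apply bounded_tanh | apply bounded_T].

Ltac solve_decay :=
  lazymatch goal with
  | |- inv_sq_decay (fun t => - @?u t) => apply (inv_sq_decay_opp u); solve_decay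
  | |- inv_sq_decay (fun t => sech t ^ _) => apply inv_sq_decay_sech_pow; lia
  | |- inv_sq_decay (fun t => t * sech t ^ _) => apply inv_sq_decay_id_mul_sech_pow; lia
  | |- inv_sq_decay (fun t => sech t ^ _ * ln (sech t)) => apply inv_sq_decay_sech_pow_mul_ln_sech; lia
  | |- inv_sq_decay (fun t => @?u t * @?v t) =>
      apply (inv_sq_decay_mul_bounded u v); [solve_decay | solve_bounded]
  end.

(* After splitting sech^(k+2) = sech^k sech^2, the only relation needed is sech^2 = 1 - tanh^2. *)
Ltac derivative_identity :=
  intros x; eapply is_derive_eq; [differentiate |];
  cbv beta; rewrite ?pow_add, ?plus_INR, ?INR_1, ?sech_sq; ring.

Ltac integrate_by_parts F g :=
  apply is_intR_unique, (is_intR_of_derive F _ g);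
  [| derivative_identity | intros; solve_continuous | intros; solve_continuous | solve_decay].

Ltac integrable :=
  unfold p_, q_, r_, s_, a_; apply is_intR_intR; [intros; solve_continuous | solve_decay].

Lemma is_intR_p j : (1 <= j)%nat -> is_intR (fun x => sech x ^ j * cos x) (p_ j).
Proof. intros; integrable. Qed.

Lemma is_intR_q j : (1 <= j)%nat -> is_intR (fun x => sech x ^ j * ln (sech x) * cos x) (q_ j).
Proof. intros; integrable. Qed.

Lemma is_intR_r j : (1 <= j)%nat -> is_intR (fun x => sech x ^ j * T x * cos x) (r_ j).
Proof. intros; integrable. Qed.

Lemma is_intR_s j : (1 <= j)%nat -> is_intR (fun x => sech x ^ j * T x * tanh x * sin x) (s_ j).
Proof. intros; integrable. Qed.

Lemma is_intR_a j : (1 <= j)%nat -> is_intR (fun x => x * sech x ^ j * tanh x * cos x) (a_ j).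
Proof. intros; integrable. Qed.

Section Recursions.

Variable k : nat.
Hypothesis hk : (1 <= k)%nat.

Lemma b_recursion : b_ k = INR (k + 1) * p_ (k + 2) - INR k * p_ k.
Proof.
  integrate_by_parts (fun x => - (sech x ^ k * tanh x * cos x))
    (fun x => INR (k + 1) * (sech x ^ (k + 2) * cos x) - INR k * (sech x ^ k * cos x)).
  apply is_intR_minus; apply is_intR_scal, is_intR_p; lia.
Qed.

Lemma c_recursion : c_ k = INR (k + 1) * q_ (k + 2) - INR k * q_ k + p_ (k + 2) - p_ k.
Proof.
  integrate_by_parts (fun x => - (sech x ^ k * ln (sech x) * tanh x * cos x))
    (fun x => INR (k + 1) * (sech x ^ (k + 2) * ln (sech x) * cos x)
              - INR k * (sech x ^ k * ln (sech x) * cos x)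
              + sech x ^ (k + 2) * cos x - sech x ^ k * cos x).
  apply is_intR_minus; [apply is_intR_plus; [apply is_intR_minus; apply is_intR_scal, is_intR_q |
                                             apply is_intR_p] |
                        apply is_intR_p]; lia.
Qed.

Lemma d_recursion : d_ k = - INR k * a_ k + p_ k.
Proof.
  integrate_by_parts (fun x => - (x * sech x ^ k * cos x))
    (fun x => - INR k * (x * sech x ^ k * tanh x * cos x) + sech x ^ k * cos x).
  apply is_intR_plus; [apply is_intR_scal, is_intR_a | apply is_intR_p]; exact hk.
Qed.

Lemma e_recursion : e_ k = s_ k + INR k * r_ k - INR (k + 1) * r_ (k + 2).
Proof.
  integrate_by_parts (fun x => sech x ^ k * tanh x * T x * cos x)
    (fun x => sech x ^ k * T x * tanh x * sin x + INR k * (sech x ^ k * T x * cos x)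
              - INR (k + 1) * (sech x ^ (k + 2) * T x * cos x)).
  apply is_intR_minus; [apply is_intR_plus; [apply is_intR_s | apply is_intR_scal, is_intR_r] |
                        apply is_intR_scal, is_intR_r]; lia.
Qed.

Lemma f_recursion : f_ k = - r_ k + INR k * s_ k.
Proof.
  integrate_by_parts (fun x => sech x ^ k * T x * sin x)
    (fun x => - (sech x ^ k * T x * cos x) + INR k * (sech x ^ k * T x * tanh x * sin x)).
  apply is_intR_plus; [apply is_intR_opp, is_intR_r | apply is_intR_scal, is_intR_s]; exact hk.
Qed.

End Recursions.

Theorem lemma2p19 (k : nat) (hk : (1 <= k)%nat) :
  b_ k = INR (k + 1) * p_ (k + 2) - INR k * p_ k /\
  c_ k = INR (k + 1) * q_ (k + 2) - INR k * q_ k + p_ (k + 2) - p_ k /\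
  d_ k = - INR k * a_ k + p_ k /\
  e_ k = s_ k + INR k * r_ k - INR (k + 1) * r_ (k + 2) /\
  f_ k = - r_ k + INR k * s_ k.
Proof.
  repeat split;
    [apply b_recursion | apply c_recursion | apply d_recursion | apply e_recursion | apply f_recursion];
    exact hk.
Qed.
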